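(* Let $G=(I\cup C,E)$ be a split graph whose clique vertices are labelled $1,\dots,k$ so that conditions (i)–(iii) below hold, and let $w$ be the word constructed below. If $a\in I$ and $b\in C$ are not adjacent in $G$, then $a$ and $b$ do not alternate in $w$.
   Context: Words: a word over a finite set $X$ is a finite sequence of elements of $X$; for a word $u$ and $S\subseteq X$, $u|_S$ is the subsequence of $u$ consisting of all occurrences of letters of $S$; $u^R$ is the reversal of $u$. Two letters $x,y$ alternate in $u$ if $u|_{\{x,y\}}$ is of the form $xyxy\cdots$ or $yxyx\cdots$ (of even or odd length); otherwise they do not alternate. For integers $a\le b$, $[a,b]=\{a,a+1,\dots,b\}$. Setting: $G=(I\cup C,E)$ is a split graph: $C$ induces a clique, $I$ induces an independent set, and $C$ is inclusion-wise maximal, i.e. no vertex of $I$ is adjacent to all vertices of $C$. The vertices of $C$ are labelled by $1,\dots,k$ where $k=|C|$, and for all $a,b\in I$: (i) either $N(a)=[1,m]\cup[n,k]$ for some $m<n$, or $N(a)=[l,r]$ for some $l\le r$; (ii) if $N(a)=[1,m]\cup[n,k]$ ($m<n$) and $N(b)=[l,r]$ ($l\le r$), then $l>m$ or $r<n$; (iii) if $N(a)=[1,m]\cup[n,k]$ and $N(b)=[1,m']\cup[n',k]$ ($m<n$, $m'<n'$), then $m'<n$ and $m<n'$. Let $B$ be the set of $a\in I$ whose neighbourhood is an integer interval $[l_a,r_a]$, and $A=I\setminus B$; for $a\in A$ write $N(a)=[1,m_a]\cup[n_a,k]$ with $m_a<n_a$. Construction of $w$: start with $p_1=p_2=p_3=12\cdots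 k$. Process the vertices of $I$ one at a time in an arbitrary fixed order; ''replace $y$ in $p$ by $yx$'' (resp. $xy$) means replacing the unique occurrence of the letter $y$ in $p$ by the two letters $yx$ (resp. $xy$). For $a\in A$: replace $m_a$ in $p_1$ by $m_a a$, and replace $n_a$ in $p_2$ by $a n_a$. For $a\in B$: replace $l_a$ in $p_1$ by $a l_a$, and replace $r_a$ in $p_2$ by $r_a a$. After all vertices of $I$ are processed, let $d=\max(\{1\}\cup\{m_a: a\in A\})$ and replace the letter $d$ in $p_3$ by the word $d\,(p_1|_A)^R$. Finally set $w=p_1\,(p_1|_B)^R\,p_2\,p_3$ (a $3$-uniform word over $V$). *)

From mathcomp Require Import all_boot.
Set Implicit Arguments. Unset Strict Implicit. Unset Printing Implicit Defensive.

(* Vertices of the split graph: clique vertices are [inl i] with 1 <= i <= k,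
   independent vertices are [inr a] with a in the list I (processing order).
   The graph is given by N : T -> nat -> bool, N a x = "a adjacent to clique vertex x";
   C is a clique and I independent by definition of a split graph. *)

Section Defs.
Variable T : eqType.
Local Notation letter := (nat + T)%type.

Definition restrict (S : seq letter) (u : seq letter) : seq letter :=
  [seq z <- u | z \in S].

Definition alt_word (x y : letter) (n : nat) : seq letter :=
  mkseq (fun i => if odd i then y else x) n.

Definition alternate (x y : letter) (u : seq letter) : Prop :=
  exists n, restrict [:: x; y] u = alt_word x y n \/
            restrict [:: x; y] u = alt_word y x n.

Definition repl_after (y x : letter) (p : seq letter) : seq letter :=
  flatten [seq if z == y then [:: z; x] else [:: z] | z <- p].
Definition repl_before (y x : letter) (p : seq letter) : seq letter :=
  flatten [seq if z == y then [:: x; z] else [:: z] | z <- p].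
Definition repl_word (y : letter) (s p : seq letter) : seq letter :=
  flatten [seq if z == y then z :: s else [:: z] | z <- p].

Variables (k : nat) (N : T -> nat -> bool).

Definition nbseq (a : T) : seq nat := [seq x <- iota 1 k | N a x].

(* a \in B : N(a) is a (nonempty) integer interval *)
Definition inB (a : T) : bool :=
  (nbseq a != [::]) && (nbseq a == iota (head 0 (nbseq a)) (size (nbseq a))).

(* for a in B : N(a) = [l_a, r_a] *)
Definition l_of (a : T) : nat := head 0 (nbseq a).
Definition r_of (a : T) : nat := last 0 (nbseq a).
(* for a in A : N(a) = [1, m_a] \cup [n_a, k] *)
Definition m_of (a : T) : nat := find (predC (N a)) (iota 1 k).
Definition n_of (a : T) : nat := (k - find (predC (N a)) (rev (iota 1 k))).+1.

Definition isB_letter (z : letter) : bool :=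
  match z with inr a => inB a | inl _ => false end.
Definition isA_letter (z : letter) : bool :=
  match z with inr a => ~~ inB a | inl _ => false end.

Definition clique_word : seq letter := [seq @inl nat T i | i <- iota 1 k].

Definition step (p : seq letter * seq letter) (a : T) : seq letter * seq letter :=
  if inB a then
    (repl_before (inl (l_of a)) (inr a) p.1, repl_after (inl (r_of a)) (inr a) p.2)
  else
    (repl_after (inl (m_of a)) (inr a) p.1, repl_before (inl (n_of a)) (inr a) p.2).

Definition p12 (I : seq T) : seq letter * seq letter :=
  foldl step (clique_word, clique_word) I.

Definition d_of (I : seq T) : nat := maxn 1 (\max_(a <- I | ~~ inB a) m_of a).

Definition word_w (I : seq T) : seq letter :=
  let p1 := (p12 I).1 in
  let p2 := (p12 I).2 in
  let p3 := repl_word (inl (d_of I)) (rev (filter isA_letter p1)) clique_word in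
  p1 ++ rev (filter isB_letter p1) ++ p2 ++ p3.

Definition split_labelling (I : seq T) : Prop :=
  uniq I /\
  [/\
      (forall a x, a \in I -> N a x -> 1 <= x <= k),
      (* C is inclusion-wise maximal *)
      (forall a, a \in I -> exists x, (1 <= x <= k) && ~~ N a x),
      (forall a, a \in I ->
         (exists m n, [/\ 1 <= m, m < n, n <= k &
            forall x, 1 <= x <= k -> N a x = (x <= m) || (n <= x)]) \/
         (exists l r, [/\ 1 <= l, l <= r, r <= k &
            forall x, 1 <= x <= k -> N a x = (l <= x <= r)])),
      (forall a b m n l r, a \in I -> b \in I ->
         1 <= m -> m < n -> n <= k -> 1 <= l -> l <= r -> r <= k ->
         (forall x, 1 <= x <= k -> N a x = (x <= m) || (n <= x)) ->
         (forall x, 1 <= x <= k -> N b x = (l <= x <= r)) ->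
         m < l \/ r < n) &
      (forall a b m n m' n', a \in I -> b \in I ->
         1 <= m -> m < n -> n <= k -> 1 <= m' -> m' < n' -> n' <= k ->
         (forall x, 1 <= x <= k -> N a x = (x <= m) || (n <= x)) ->
         (forall x, 1 <= x <= k -> N b x = (x <= m') || (n' <= x)) ->
         m' < n /\ m < n')].

End Defs.

From mathcomp Require Import all_boot zify.
Set Implicit Arguments. Unset Strict Implicit. Unset Printing Implicit Defensive.

(* Only the part of the construction that involves [a] matters: deleting every
   other vertex of [I] from [p1] and [p2] gives exactly the words obtained by
   processing [a] alone.  Restricted to [{a, b}], the four blocks of [w] then
   start with [b a | a | b a] if [b < l_a], with [a b | a | a b] if [r_a < b]
   (for [a] in [B]), and with [a b | | b a] for [a] in [A] (where [m_a < b < n_a]);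
   in each case some letter occurs twice in a row. *)

Section Words.
Variable T : eqType.
Local Notation letter := (nat + T)%type.

Lemma alt_word_no_repeat (x y z : letter) n s t : x != y ->
  alt_word x y n <> s ++ z :: z :: t.
Proof.
move=> xy E.
have lt_sn : (size s).+1 < n.
  by move: (congr1 size E); rewrite size_mkseq size_cat /= => ->; lia.
have : nth x (alt_word x y n) (size s) != nth x (alt_word x y n) (size s).+1.
  by rewrite !nth_mkseq ?(ltnW lt_sn) //=; case: (odd _); rewrite // eq_sym.
by rewrite E nth_cat ltnn subnn nth_cat ltnNge leqnSn subSnn eqxx.
Qed.

Lemma not_alternate_repeat (x y z : letter) u s t : x != y ->
  restrict [:: x; y] u = s ++ z :: z :: t -> ~ alternate x y u.
Proof.
move=> xy Eu [n [] E]; rewrite Eu in E; apply: (alt_word_no_repeat _ (esym E)) => //.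
by rewrite eq_sym.
Qed.

Lemma restrict_filter (S : seq letter) (P : pred letter) u :
  {subset S <= P} -> restrict S (filter P u) = restrict S u.
Proof.
move=> sSP; rewrite /restrict -filter_predI; apply: eq_filter => z /=.
by case Sz: (z \in S) => //=; apply: sSP.
Qed.

Section Replace.
Variables (P : pred letter) (y x : letter).

Lemma filter_repl_before_out p : ~~ P x -> filter P (repl_before y x p) = filter P p.
Proof.
move=> Px; elim: p => //= z p; rewrite /repl_before /= filter_cat => ->.
by case: (z == y); rewrite /= ?(negbTE Px); case: (P z).
Qed.

Lemma filter_repl_after_out p : ~~ P x -> filter P (repl_after y x p) = filter P p.
Proof.
move=> Px; elim: p => //= z p; rewrite /repl_after /= filter_cat => ->.
by case: (z == y); rewrite /= ?(negbTE Px); case: (P z).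
Qed.

Lemma filter_repl_before p : P x -> P y ->
  filter P (repl_before y x p) = repl_before y x (filter P p).
Proof.
move=> Px Py; elim: p => //= z p; rewrite /repl_before /= filter_cat => ->.
case: (eqVneq z y) => [->|ne_zy] /=; first by rewrite Px Py /= eqxx.
by case: (P z); rewrite /= ?(negbTE ne_zy).
Qed.

Lemma filter_repl_after p : P x -> P y ->
  filter P (repl_after y x p) = repl_after y x (filter P p).
Proof.
move=> Px Py; elim: p => //= z p; rewrite /repl_after /= filter_cat => ->.
case: (eqVneq z y) => [->|ne_zy] /=; first by rewrite Px Py /= eqxx.
by case: (P z); rewrite /= ?(negbTE ne_zy).
Qed.

Lemma restrict_repl_before_after (S : seq letter) p : y \notin S ->
  restrict S (repl_before y x p) = restrict S (repl_after y x p).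
Proof.
move=> yS; elim: p => //= z p; rewrite /restrict /repl_before /repl_after /= !filter_cat => ->.
by case: (eqVneq z y) => [->|_] /=; rewrite ?(negbTE yS) ?cats0.
Qed.

End Replace.
End Words.

Section Construction.
Variable T : eqType.
Local Notation letter := (nat + T)%type.
Variables (k : nat) (N : T -> nat -> bool).

Lemma restrict_clique_word2 (S : seq letter) i j : 1 <= i -> i < j -> j <= k ->
  (forall x, (inl x \in S) = (x == i) || (x == j)) ->
  restrict S (clique_word T k) = [:: inl i; inl j].
Proof.
move=> i1 lt_ij jk HS; rewrite /restrict /clique_word filter_map.
suff -> : filter (preim inl (mem S)) (iota 1 k) = [:: i; j] by [].
apply: (irr_sorted_eq (leT := ltn)); [exact: ltn_trans | exact: ltnn | | |].
- by apply: sorted_filter; [exact: ltn_trans | exact: iota_ltn_sorted].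
- by rewrite /= lt_ij.
move=> x; rewrite mem_filter mem_iota /= HS !inE; lia.
Qed.

Lemma restrict_repl_clique_word (a : T) b l : 1 <= b <= k -> 1 <= l <= k -> b != l ->
  restrict [:: inr a; inl b] (repl_after (inl l) (inr a) (clique_word T k))
  = if b < l then [:: inl b; inr a] else [:: inr a; inl b].
Proof.
move=> /andP[b1 bk] /andP[l1 lk] ne_bl.
have [ne_bl' ne_lb'] : (b == l) = false /\ (l == b) = false.
  by rewrite (negbTE ne_bl) eq_sym (negbTE ne_bl).
(* The insertion point [l] must stay visible while [a] is inserted. *)
set S3 := [:: inr a; inl b; inl l].
have sub : {subset [:: inr a; inl b] <= [pred z | z \in S3]}.
  by move=> z; rewrite /S3 !inE => /orP[]->; rewrite ?orbT.
rewrite -(restrict_filter _ sub) filter_repl_after ?inE ?eqxx ?orbT //.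
rewrite -/(restrict S3 (clique_word T k)).
have [lt_bl|lt_lb] := ltnP b l.
  rewrite (@restrict_clique_word2 _ b l) //; last by move=> x; rewrite !inE.
  by rewrite /repl_after /restrict; do 2!rewrite /= ?inE ?(inj_eq inl_inj) ?eqxx ?ne_bl' ?ne_lb'.
rewrite leq_eqVlt ne_lb' /= in lt_lb.
rewrite (@restrict_clique_word2 _ l b) //; last by move=> x; rewrite /S3 !inE /= !(inj_eq inl_inj) orbC.
by rewrite /repl_after /restrict; do 2!rewrite /= ?inE ?(inj_eq inl_inj) ?eqxx ?ne_bl' ?ne_lb'.
Qed.

Lemma restrict_repl_before_clique_word (a : T) b l :
  1 <= b <= k -> 1 <= l <= k -> b != l ->
  restrict [:: inr a; inl b] (repl_before (inl l) (inr a) (clique_word T k))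
  = if b < l then [:: inl b; inr a] else [:: inr a; inl b].
Proof.
move=> b_rng l_rng ne_bl; rewrite restrict_repl_before_after ?restrict_repl_clique_word //.
by rewrite !inE /= (inj_eq inl_inj) eq_sym.
Qed.

Definition filter_pair (P : pred letter) (p : seq letter * seq letter) :=
  (filter P p.1, filter P p.2).

Lemma filter_pair_step_out (P : pred letter) p c : ~~ P (inr c) ->
  filter_pair P (step k N p c) = filter_pair P p.
Proof.
move=> Pc; rewrite /step /filter_pair; case: (inB k N c) => /=;
  by rewrite ?filter_repl_before_out ?filter_repl_after_out.
Qed.

Lemma filter_pair_step_in (P : pred letter) p c : P (inr c) -> (forall i, P (inl i)) ->
  filter_pair P (step k N p c) = step k N (filter_pair P p) c.
Proof.
move=> Pc Pl; rewrite /step /filter_pair; case: (inB k N c) => /=;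
  by rewrite ?filter_repl_before ?filter_repl_after.
Qed.

Lemma filter_pair_foldl_out (P : pred letter) p J : {in J, forall c, ~~ P (inr c)} ->
  filter_pair P (foldl (step k N) p J) = filter_pair P p.
Proof.
elim: J p => //= c J IH p PJ.
rewrite IH ?filter_pair_step_out ?PJ ?mem_head // => c' c'J.
by apply: PJ; rewrite inE c'J orbT.
Qed.

Definition clique_or_vertex (a : T) : pred letter :=
  fun z => if z is inr c then c == a else true.

Lemma filter_pair_p12 (I1 : seq T) a (I2 : seq T) : a \notin I1 -> a \notin I2 ->
  filter_pair (clique_or_vertex a) (p12 k N (I1 ++ a :: I2))
  = step k N (clique_word T k, clique_word T k) a.
Proof.
have out (J : seq T) : a \notin J -> {in J, forall c, ~~ clique_or_vertex a (inr c)}.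
  by move=> aJ c cJ /=; apply: contraNneq aJ => <-.
move=> aI1 aI2; rewrite /p12 foldl_cat /= (filter_pair_foldl_out _ (out _ aI2)).
rewrite filter_pair_step_in //= (filter_pair_foldl_out _ (out _ aI1)) /filter_pair /=.
suff -> : filter (clique_or_vertex a) (clique_word T k) = clique_word T k by [].
by apply/all_filterP/allP => z /mapP[i _ ->].
Qed.

Lemma mem_nbseq a x : (x \in nbseq k N a) = N a x && (1 <= x <= k).
Proof. by rewrite mem_filter mem_iota add1n ltnS. Qed.

Lemma interval_inB a l r : 1 <= l -> l <= r -> r <= k ->
  (forall x, 1 <= x <= k -> N a x = (l <= x <= r)) -> inB k N a.
Proof.
move=> l1 lr rk Na.
suff E : nbseq k N a = iota l (r - l).+1 by rewrite /inB E /= size_iota eqxx.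
apply: (irr_sorted_eq (leT := ltn)); [exact: ltn_trans | exact: ltnn | | |].
- by apply: sorted_filter; [exact: ltn_trans | exact: iota_ltn_sorted].
- exact: iota_ltn_sorted.
move=> x; rewrite mem_nbseq mem_iota.
case xk: (1 <= x <= k); last by rewrite andbF; apply/esym/negbTE; move: xk; lia.
by rewrite Na // andbT; lia.
Qed.

Lemma inB_non_neighbour a b : inB k N a -> 1 <= b <= k -> ~~ N a b ->
  [/\ 1 <= l_of k N a, l_of k N a <= r_of k N a, r_of k N a <= k &
      b < l_of k N a \/ r_of k N a < b].
Proof.
move=> /andP[ne /eqP E] bk Nab.
have l_in : l_of k N a \in nbseq k N a.
  by rewrite /l_of; case: (nbseq k N a) ne => //= x s _; rewrite mem_head.
have r_in : r_of k N a \in nbseq k N a.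
  by rewrite /r_of; case: (nbseq k N a) ne => //= x s _; apply: mem_last.
have b_out : b \notin nbseq k N a by rewrite mem_nbseq (negbTE Nab).
move: (l_in) (r_in); rewrite !mem_nbseq => /andP[_ /andP[l1 lk]] /andP[_ /andP[r1 rk]].
move: r_in b_out; rewrite E -/(l_of k N a) !mem_iota => /andP[lr r_lt] b_out.
split=> //; case: (ltnP b (l_of k N a)) => bl; [by left | right].
by move: b_out; rewrite bl /= -leqNgt; lia.
Qed.

Lemma not_inB_ends a :
  (exists m n, [/\ 1 <= m, m < n, n <= k &
     forall x, 1 <= x <= k -> N a x = (x <= m) || (n <= x)]) \/
  (exists l r, [/\ 1 <= l, l <= r, r <= k &
     forall x, 1 <= x <= k -> N a x = (l <= x <= r)]) ->
  ~~ inB k N a -> N a 1 && N a k.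
Proof.
case=> [[m [n [m1 lt_mn nk Na]]] _ | [l [r [l1 lr rk Na]]]].
  by rewrite !Na ?m1 ?nk ?orbT ?leqnn //; lia.
by rewrite (interval_inB l1 lr rk Na).
Qed.

Lemma m_n_non_neighbour a b : 1 <= b <= k -> ~~ N a b -> N a 1 -> N a k ->
  [/\ 1 <= m_of k N a, m_of k N a < b, b < n_of k N a & n_of k N a <= k].
Proof.
move=> /andP[b1 bk] Nab Na1 Nak.
have hasN : has (predC (N a)) (iota 1 k).
  by apply/hasP; exists b; rewrite ?mem_iota ?add1n ?ltnS ?b1 ?bk //= Nab.
have hasR : has (predC (N a)) (rev (iota 1 k)) by rewrite has_rev.
have mk := hasN; rewrite has_find size_iota in mk.
have jk := hasR; rewrite has_find size_rev size_iota in jk.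
have Nm := nth_find 0 hasN; rewrite nth_iota // in Nm.
have Nj := nth_find 0 hasR; rewrite nth_rev ?size_iota // nth_iota in Nj; last by lia.
rewrite /m_of /n_of.
set m := find _ (iota 1 k) in mk Nm *.
set j := find _ (rev (iota 1 k)) in jk Nj *.
split.
- by case: m Nm mk => //=; rewrite Na1.
- rewrite ltnNge; apply/negP => bm.
  have : predC (N a) (nth 0 (iota 1 k) b.-1) = false by apply: before_find; lia.
  rewrite nth_iota; last lia.
  by rewrite (_ : 1 + b.-1 = b) /= ?Nab; last lia.
- rewrite ltnNge; apply/negP => bj.
  have : predC (N a) (nth 0 (rev (iota 1 k)) (k - b)) = false by apply: before_find; lia.
  rewrite nth_rev ?size_iota; last lia.
  rewrite nth_iota; last lia.
  by rewrite (_ : 1 + (k - (k - b).+1) = b) /= ?Nab; last lia.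
- case: j Nj jk => [|j] /=; last by lia.
  by rewrite subn1 add1n prednK ?Nak //; lia.
Qed.

Lemma restrict_p12 (S : seq letter) I a : uniq I -> a \in I ->
  {subset S <= clique_or_vertex a} ->
  restrict S (p12 k N I).1 = restrict S (step k N (clique_word T k, clique_word T k) a).1 /\
  restrict S (p12 k N I).2 = restrict S (step k N (clique_word T k, clique_word T k) a).2.
Proof.
move=> uI aI sS; case/splitPr: aI uI => I1 I2.
rewrite cat_uniq /= => /and4P[_ /norP[aI1 _] aI2 _].
have := filter_pair_p12 aI1 aI2.
move=> /[dup] /(congr1 fst) /= E1 /(congr1 snd) /= E2.
by rewrite -(restrict_filter (p12 _ _ _).1 sS) -(restrict_filter (p12 _ _ _).2 sS) E1 E2.
Qed.

Lemma restrict_word_w (S : seq letter) I : exists t,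
  restrict S (word_w k N I) = restrict S (p12 k N I).1
    ++ rev (filter (isB_letter k N) (restrict S (p12 k N I).1))
    ++ restrict S (p12 k N I).2 ++ t.
Proof.
have swap u : [seq z <- filter (isB_letter k N) u | z \in S]
            = filter (isB_letter k N) [seq z <- u | z \in S].
  by rewrite -!filter_predI; apply: eq_filter => z /=; rewrite andbC.
by eexists; rewrite /word_w {1}/restrict !filter_cat filter_rev swap.
Qed.

End Construction.

Theorem lemma4 (T : eqType) (k : nat) (N : T -> nat -> bool) (I : seq T) :
  split_labelling k N I ->
  forall (a : T) (b : nat), a \in I -> 1 <= b <= k -> ~~ N a b ->
  ~ alternate (inr a) (inl b) (word_w k N I).
Proof.
move=> [uI [_ _ form _ _]] a b aI b_rng Nab.
have sS : {subset [:: inr a; inl b] <= clique_or_vertex a}.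
  by move=> z; rewrite !inE => /orP[]/eqP->; rewrite unfold_in /= ?eqxx.
have [R1 R2] := restrict_p12 k N uI aI sS.
have [t Ew] := restrict_word_w k N [:: inr a; inl b] I.
rewrite R1 R2 /step in Ew.
have ab : (inr a : nat + T) != inl b by [].
case Ba: (inB k N a) in Ew.
  have [l1 lr rk b_out] := inB_non_neighbour Ba b_rng Nab.
  have l_rng : 1 <= l_of k N a <= k by lia.
  have r_rng : 1 <= r_of k N a <= k by lia.
  have [ne_bl ne_br] : b != l_of k N a /\ b != r_of k N a by lia.
  rewrite restrict_repl_before_clique_word // restrict_repl_clique_word // in Ew.
  case: b_out => [lt_bl | lt_rb].
    rewrite lt_bl (leq_trans lt_bl lr) /= Ba in Ew.
    exact: (not_alternate_repeat (s := [:: inl b]) ab Ew).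
  rewrite leq_gtF ?(leq_trans lr (ltnW lt_rb)) // leq_gtF ?(ltnW lt_rb) //= Ba in Ew.
  exact: (not_alternate_repeat (s := [:: inr a; inl b]) ab Ew).
have /andP[Na1 Nak] := not_inB_ends (form a aI) (negbT Ba).
have [m1 lt_mb lt_bn nk] := m_n_non_neighbour b_rng Nab Na1 Nak.
have m_rng : 1 <= m_of k N a <= k by lia.
have n_rng : 1 <= n_of k N a <= k by lia.
have [ne_bm ne_bn] : b != m_of k N a /\ b != n_of k N a by lia.
rewrite restrict_repl_clique_word // restrict_repl_before_clique_word // in Ew.
rewrite leq_gtF ?(ltnW lt_mb) // lt_bn /= Ba in Ew.
exact: (not_alternate_repeat (s := [:: inr a]) ab Ew).
Qed.
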